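(* Let $p:E\to B$ be a finite covering map between connected manifolds, and let $f:E\to E$, $g:B\to B$ be continuous maps with $p\circ f=g\circ p$. Then: (1) $p^{-1}(\mathrm{ePer}(g))=\mathrm{ePer}(f)$; (2) $p(\mathrm{Per}(f))=\mathrm{Per}(g)$; (3) if moreover $p$ is a regular covering with (finite) group $H$ of deck transformations, and the morphism $f^{\#}:H\to H$ determined by $f\circ h=f^{\#}(h)\circ f$ for all $h\in H$ is injective, then $p^{-1}(\mathrm{Per}(g))=\mathrm{Per}(f)$.
   Context: A covering $p$ is finite if its fibers are finite, and regular if its deck transformation group acts transitively on each fiber. For a self-map $f$: $\mathrm{Per}(f)=\{x:\exists k>0, f^k(x)=x\}$, $\mathrm{ePer}(f)=\{x:\exists k>0, f^k(x)\in\mathrm{Per}(f)\}$. *)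

From Stdlib Require Import Reals Lra List Classical.
Open Scope R_scope.

Record Top := MkTop {
  carrier :> Type;
  is_open : (carrier -> Prop) -> Prop;
  open_full : is_open (fun _ => True);
  open_inter : forall U V, is_open U -> is_open V -> is_open (fun x => U x /\ V x);
  open_union : forall F : (carrier -> Prop) -> Prop,
      (forall U, F U -> is_open U) -> is_open (fun x => exists U, F U /\ U x)
}.

Arguments is_open {t} _.

(* f is continuous on the subset A (for the subspace topology on A) *)
Definition continuous_on {X Y : Top} (A : X -> Prop) (f : X -> Y) : Prop :=
  forall W : Y -> Prop, is_open W ->
    exists O : X -> Prop, is_open O /\
      (forall x, A x -> (O x <-> W (f x))).

Definition continuous {X Y : Top} (f : X -> Y) : Prop :=
  forall W : Y -> Prop, is_open W -> is_open (fun x => W (f x)).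

Definition connected (X : Top) : Prop :=
  inhabited X /\
  forall U V : X -> Prop, is_open U -> is_open V ->
    (forall x, U x \/ V x) -> (forall x, ~ (U x /\ V x)) ->
    (forall x, U x) \/ (forall x, V x).

Definition hausdorff (X : Top) : Prop :=
  forall x y : X, x <> y -> exists U V : X -> Prop,
    is_open U /\ is_open V /\ U x /\ V y /\ (forall z, ~ (U z /\ V z)).

Definition second_countable (X : Top) : Prop :=
  exists base : nat -> X -> Prop, (forall n, is_open (base n)) /\
    forall U : X -> Prop, is_open U -> forall x, U x ->
      exists n, base n x /\ (forall y, base n y -> U y).

(* Euclidean space R^n : real sequences vanishing from index n on,
   with the usual (product / sup-norm) topology. *)
Definition Rn (n : nat) : Type := { x : nat -> R | forall i, (n <= i)%nat -> x i = 0 }.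

Definition Rn_open (n : nat) (U : Rn n -> Prop) : Prop :=
  forall x, U x -> exists eps, eps > 0 /\
    forall y : Rn n, (forall i, (i < n)%nat -> Rabs (proj1_sig y i - proj1_sig x i) < eps) -> U y.

Lemma Rn_open_full n : Rn_open n (fun _ => True).
Proof. intros x _; exists 1; split; [lra|auto]. Qed.

Lemma Rn_open_inter n U V : Rn_open n U -> Rn_open n V -> Rn_open n (fun x => U x /\ V x).
Proof.
  intros HU HV x [Ux Vx]. destruct (HU x Ux) as [e1 [He1 H1]].
  destruct (HV x Vx) as [e2 [He2 H2]].
  exists (Rmin e1 e2); split; [apply Rmin_pos; lra|].
  intros y Hy; split; [apply H1|apply H2]; intros i Hi; specialize (Hy i Hi);
  [pose proof (Rmin_l e1 e2)|pose proof (Rmin_r e1 e2)]; lra.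
Qed.

Lemma Rn_open_union n (F : (Rn n -> Prop) -> Prop) :
  (forall U, F U -> Rn_open n U) -> Rn_open n (fun x => exists U, F U /\ U x).
Proof.
  intros HF x [U [FU Ux]]. destruct (HF U FU x Ux) as [e [He H]].
  exists e; split; auto. intros y Hy; exists U; auto.
Qed.

Definition Euclid (n : nat) : Top :=
  MkTop (Rn n) (Rn_open n) (Rn_open_full n) (Rn_open_inter n) (Rn_open_union n).

Definition locally_euclidean (X : Top) (n : nat) : Prop :=
  forall x : X, exists (U : X -> Prop) (V : Euclid n -> Prop)
    (phi : X -> Euclid n) (psi : Euclid n -> X),
    is_open U /\ U x /\ is_open V /\
    (forall y, U y -> V (phi y) /\ psi (phi y) = y) /\
    (forall z, V z -> U (psi z) /\ phi (psi z) = z) /\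
    continuous_on U phi /\ continuous_on V psi.

Definition manifold (X : Top) : Prop :=
  hausdorff X /\ second_countable X /\ exists n, locally_euclidean X n.

Definition homeo_onto {E B : Top} (p : E -> B) (V : E -> Prop) (U : B -> Prop) : Prop :=
  exists s : B -> E,
    (forall x, V x -> U (p x) /\ s (p x) = x) /\
    (forall y, U y -> V (s y) /\ p (s y) = y) /\
    continuous_on V p /\ continuous_on U s.

Definition covering_map {E B : Top} (p : E -> B) : Prop :=
  continuous p /\ (forall b, exists x, p x = b) /\
  forall b : B, exists U : B -> Prop, is_open U /\ U b /\
    exists Sheets : (E -> Prop) -> Prop,
      (forall V, Sheets V -> is_open V /\ homeo_onto p V U) /\
      (forall x, U (p x) <-> exists V, Sheets V /\ V x) /\
      (forall V W x, Sheets V -> Sheets W -> V x -> W x -> V = W).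

Definition finite_covering {E B : Top} (p : E -> B) : Prop :=
  covering_map p /\ forall b, exists l : list E, forall x, p x = b -> In x l.

Definition deck_transformation {E B : Top} (p : E -> B) (h : E -> E) : Prop :=
  exists h' : E -> E, continuous h /\ continuous h' /\
    (forall x, h' (h x) = x) /\ (forall x, h (h' x) = x) /\
    (forall x, p (h x) = p x).

Definition regular_covering {E B : Top} (p : E -> B) : Prop :=
  covering_map p /\
  forall x y, p x = p y -> exists h, deck_transformation p h /\ h x = y.

Definition Per {X : Type} (f : X -> X) (x : X) : Prop :=
  exists k, (0 < k)%nat /\ Nat.iter k f x = x.

Definition ePer {X : Type} (f : X -> X) (x : X) : Prop :=
  exists k, (0 < k)%nat /\ Per f (Nat.iter k f x).

From Stdlib Require Import Reals List Classical.
From Stdlib Require Import Lia FunctionalExtensionality PropExtensionality.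

(* Since p semiconjugates f to g, p maps Per(f) into Per(g) and
   ePer(f) into ePer(g). Conversely, if g^n fixes b, then f^n maps the finite
   fibre over b into itself, so every f^n-orbit starting in that fibre repeats,
   producing f-periodic points over b and eventually periodic points over
   eventually periodic points of g. Under the hypotheses of (3), f is injective
   on fibres: if f y1 = f y2 with p y1 = p y2, the deck transformation h with
   h y1 = y2 makes f#(h) fix f y1; a deck transformation with a fixed point of
   the connected space E is the identity, so f#(h) = f#(id), hence h = id.
   An injective self-map of a finite fibre is a permutation, so every point of
   the fibre over a g-periodic point is f-periodic. *)

Lemma iter_mul {X : Type} (f : X -> X) i n x :
  Nat.iter i (Nat.iter n f) x = Nat.iter (i * n) f x.
Proof. induction i; simpl; auto. now rewrite Nat.iter_add, IHi. Qed.

Lemma iter_iter_fixed {X : Type} (g : X -> X) n b :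
  Nat.iter n g b = b -> forall i, Nat.iter i (Nat.iter n g) b = b.
Proof. intros Hb i; induction i; simpl; congruence. Qed.

Lemma Per_of_iter_repeat {X : Type} (f : X -> X) i d y :
  (0 < d)%nat -> Nat.iter (d + i) f y = Nat.iter i f y -> Per f (Nat.iter i f y).
Proof. intros Hd Hrep; exists d; split; auto. now rewrite <- Nat.iter_add. Qed.

Lemma Per_of_Per_iter {X : Type} (f : X -> X) n y :
  (0 < n)%nat -> Per (Nat.iter n f) y -> Per f y.
Proof.
  intros Hn [d [Hd Hy]]; exists (d * n)%nat; split; [lia|].
  now rewrite <- iter_mul.
Qed.

Lemma list_pigeonhole {X : Type} (u : nat -> X) (l : list X) :
  (forall i, In (u i) l) -> exists i d, (0 < d)%nat /\ u (d + i)%nat = u i.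
Proof.
  intros Hin; apply NNPP; intros Hnorep.
  assert (Hnodup : NoDup (map u (seq 0 (S (length l))))).
  { apply NoDup_map_NoDup_ForallPairs; [|apply seq_NoDup].
    intros a b _ _ Hab; apply NNPP; intros Hne; apply Hnorep.
    destruct (Nat.lt_total a b) as [Hlt|[Heq|Hlt]]; [| contradiction |].
    - exists a, (b - a)%nat; split; [lia|]. now replace (b - a + a)%nat with b by lia.
    - exists b, (a - b)%nat; split; [lia|]. now replace (a - b + b)%nat with a by lia. }
  assert (Hincl : incl (map u (seq 0 (S (length l)))) l).
  { intros y Hy; apply in_map_iff in Hy; destruct Hy as [i [<- _]]; apply Hin. }
  pose proof (NoDup_incl_length Hnodup Hincl) as Hlen.
  rewrite length_map, length_seq in Hlen; lia.
Qed.

Definition inj_on_fibres {E B : Type} (p : E -> B) (f : E -> E) : Prop :=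
  forall y1 y2, p y1 = p y2 -> f y1 = f y2 -> y1 = y2.

Section Semiconjugacy.

Variables (E B : Type) (p : E -> B) (f : E -> E) (g : B -> B).
Hypothesis Hcomm : forall x, p (f x) = g (p x).

Let p_iter := Nat.iter_swap_gen _ _ p f g Hcomm.

Lemma Per_semiconj x : Per f x -> Per g (p x).
Proof. intros [k [Hk Hx]]; exists k; split; auto. now rewrite <- p_iter, Hx. Qed.

Lemma ePer_semiconj x : ePer f x -> ePer g (p x).
Proof.
  intros [k [Hk Hper]]; exists k; split; auto.
  rewrite <- p_iter; now apply Per_semiconj.
Qed.

Lemma fibre_iter_invariant n b y i :
  Nat.iter n g b = b -> p y = b -> p (Nat.iter i (Nat.iter n f) y) = b.
Proof.
  intros Hb Hy; rewrite iter_mul, p_iter, Hy, <- iter_mul.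
  now apply iter_iter_fixed.
Qed.

Lemma iter_inj_on_fibres k :
  inj_on_fibres p f -> inj_on_fibres p (Nat.iter k f).
Proof.
  intros Hinj; induction k as [|k IHk]; intros y1 y2 Hp Hk; simpl in Hk; auto.
  apply IHk; auto.
  apply Hinj; auto. now rewrite !p_iter, Hp.
Qed.

Hypothesis Hfin : forall b, exists l, forall x, p x = b -> In x l.

Lemma fibre_orbit_repeats n b y :
  Nat.iter n g b = b -> p y = b ->
  exists i d, (0 < d)%nat /\
    Nat.iter (d + i) (Nat.iter n f) y = Nat.iter i (Nat.iter n f) y.
Proof.
  intros Hb Hy; destruct (Hfin b) as [l Hl].
  apply (list_pigeonhole (fun i => Nat.iter i (Nat.iter n f) y) l).
  intro i; apply Hl; now apply fibre_iter_invariant.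
Qed.

Lemma Per_in_fibre_orbit n b y :
  (0 < n)%nat -> Nat.iter n g b = b -> p y = b ->
  exists i, Per f (Nat.iter i (Nat.iter n f) y).
Proof.
  intros Hn Hb Hy.
  destruct (fibre_orbit_repeats n b y Hb Hy) as [i [d [Hd Hrep]]].
  exists i; apply (Per_of_Per_iter f n); auto.
  now apply Per_of_iter_repeat with d.
Qed.

Lemma Per_of_inj_on_fibres x :
  inj_on_fibres p f -> Per g (p x) -> Per f x.
Proof.
  intros Hinj [n [Hn Hb]].
  destruct (fibre_orbit_repeats n _ x Hb eq_refl) as [i [d [Hd Hrep]]].
  apply (Per_of_Per_iter f n); auto; exists d; split; auto.
  rewrite iter_mul; apply (iter_inj_on_fibres (i * n) Hinj).
  - now rewrite <- iter_mul; apply fibre_iter_invariant.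
  - now rewrite <- !iter_mul, <- Nat.iter_add, Nat.add_comm.
Qed.

End Semiconjugacy.

Lemma open_of_locally_open (X : Top) (S : X -> Prop) :
  (forall x, S x -> exists O, is_open O /\ O x /\ forall y, O y -> S y) -> is_open S.
Proof.
  intros HS.
  replace S with (fun x => exists O, (is_open O /\ forall y, O y -> S y) /\ O x).
  - apply open_union; intros O [HO _]; exact HO.
  - apply functional_extensionality; intro x; apply propositional_extensionality.
    split; [intros [O [[_ HO] Ox]]; auto|].
    intros Sx; destruct (HS x Sx) as [O [HO [Ox HOS]]]; eauto.
Qed.

Lemma connected_locally_constant (X : Top) (P : X -> Prop) :
  connected X ->
  (forall w, exists O, is_open O /\ O w /\ forall y, O y -> (P y <-> P w)) ->
  forall z, P z -> forall w, P w.
Proof.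
  intros [_ Hconn] Hloc z Pz.
  destruct (Hconn P (fun w => ~ P w)) as [HP|HnP].
  - apply open_of_locally_open; intros w Pw; destruct (Hloc w) as [O [HO [Ow HOw]]].
    exists O; repeat split; auto; intros y Oy; now apply HOw.
  - apply open_of_locally_open; intros w nPw; destruct (Hloc w) as [O [HO [Ow HOw]]].
    exists O; repeat split; auto; intros y Oy Py; apply nPw, (HOw y Oy), Py.
  - intro x; apply classic.
  - intros x [Px nPx]; auto.
  - exact HP.
  - now destruct (HnP z Pz).
Qed.

Lemma homeo_onto_inj {E B : Top} (p : E -> B) V U :
  homeo_onto p V U -> forall x y, V x -> V y -> p x = p y -> x = y.
Proof.
  intros [s [Hs _]] x y Vx Vy Hxy.
  destruct (Hs x Vx) as [_ Hx]; destruct (Hs y Vy) as [_ Hy]; congruence.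
Qed.

(* On the open set V ∩ h^{-1}(W), with V, W the sheets through w and h w,
   h fixes either every point (if V = W) or none. *)
Lemma deck_fixed_locally_constant {E B : Top} (p : E -> B) h :
  covering_map p -> deck_transformation p h ->
  forall w, exists O, is_open O /\ O w /\ forall y, O y -> (h y = y <-> h w = w).
Proof.
  intros [_ [_ Hcov]] [_ [Hh [_ [_ [_ Hph]]]]] w.
  destruct (Hcov (p w)) as [U [_ [Uw [Sheets [HSh [HU Huniq]]]]]].
  destruct (proj1 (HU w) Uw) as [V [SV Vw]].
  destruct (proj1 (HU (h w))) as [W [SW Whw]]; [now rewrite Hph|].
  destruct (HSh V SV) as [HVo HVhomeo]; destruct (HSh W SW) as [HWo _].
  assert (Hfix : forall y, V y -> V (h y) -> h y = y).
  { intros y Vy Vhy; apply (homeo_onto_inj p V U); auto. }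
  exists (fun y => V y /\ W (h y)); split; [now apply open_inter, Hh|].
  split; [now split|].
  intros y [Vy Wy]; split.
  - intros Hy; assert (V = W) by (apply (Huniq V W y); auto; congruence).
    subst W; auto.
  - intros Hw; assert (V = W) by (apply (Huniq V W w); auto; congruence).
    subst W; auto.
Qed.

Lemma deck_fixed_point_id {E B : Top} (p : E -> B) h :
  covering_map p -> connected E -> deck_transformation p h ->
  forall z, h z = z -> forall w, h w = w.
Proof.
  intros Hcov cE Hh.
  apply (connected_locally_constant E (fun w => h w = w) cE).
  now apply deck_fixed_locally_constant with p.
Qed.

Lemma deck_id {E B : Top} (p : E -> B) : deck_transformation p (fun z => z).
Proof. exists (fun z => z); repeat split; auto; intros W HW; exact HW. Qed.

Lemma inj_on_fibres_of_injective_sharp {E B : Top} (p : E -> B) f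
  (fsharp : (E -> E) -> (E -> E)) :
  regular_covering p -> connected E ->
  (forall h, deck_transformation p h ->
     deck_transformation p (fsharp h) /\ (forall x, f (h x) = fsharp h (f x))) ->
  (forall h1 h2, deck_transformation p h1 -> deck_transformation p h2 ->
     fsharp h1 = fsharp h2 -> h1 = h2) ->
  inj_on_fibres p f.
Proof.
  intros [Hcov Htrans] cE Hsharp Hinj y1 y2 Hp Hf.
  destruct (Htrans y1 y2 Hp) as [h [Hh Hy]].
  destruct (Hsharp h Hh) as [Hsh Hsh_comm].
  destruct (Hsharp _ (deck_id p)) as [Hsid Hsid_comm].
  assert (Hsh_fix : fsharp h (f y1) = f y1) by now rewrite <- Hsh_comm, Hy.
  assert (Hsid_fix : fsharp (fun z => z) (f y1) = f y1) by now rewrite <- Hsid_comm.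
  assert (Hsame : fsharp h = fsharp (fun z => z)).
  { apply functional_extensionality; intro w.
    now rewrite (deck_fixed_point_id p _ Hcov cE Hsh _ Hsh_fix w),
                (deck_fixed_point_id p _ Hcov cE Hsid _ Hsid_fix w). }
  assert (Hid : h = fun z => z) by (apply Hinj; auto; apply deck_id).
  now rewrite <- Hy, Hid.
Qed.

Theorem mainTheorem9 (E B : Top) (p : E -> B) (f : E -> E) (g : B -> B)
  (HE : manifold E) (HB : manifold B) (cE : connected E) (cB : connected B)
  (Hp : finite_covering p) (Hf : continuous f) (Hg : continuous g)
  (Hcomm : forall x, p (f x) = g (p x)) :
  (forall x, ePer g (p x) <-> ePer f x) /\
  (forall b, Per g b <-> exists x, Per f x /\ p x = b) /\
  (regular_covering p ->
   forall fsharp : (E -> E) -> (E -> E),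
     (forall h, deck_transformation p h ->
        deck_transformation p (fsharp h) /\ (forall x, f (h x) = fsharp h (f x))) ->
     (forall h1 h2, deck_transformation p h1 -> deck_transformation p h2 ->
        fsharp h1 = fsharp h2 -> h1 = h2) ->
     forall x, Per g (p x) <-> Per f x).
Proof.
  destruct Hp as [[_ [Hsurj _]] Hfin].
  split; [|split].
  - intro x; split; [|apply (ePer_semiconj _ _ p f g Hcomm)].
    intros [k [Hk [n [Hn Hper]]]].
    rewrite <- (Nat.iter_swap_gen _ _ p f g Hcomm) in Hper.
    destruct (Per_in_fibre_orbit _ _ p f g Hcomm Hfin n _ _ Hn Hper eq_refl) as [i Hi].
    exists (i * n + k)%nat; split; [lia|].
    now rewrite Nat.iter_add, <- iter_mul.
  - intro b; split; [|intros [x [Hx <-]]; exact (Per_semiconj _ _ p f g Hcomm x Hx)].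
    intros [n [Hn Hb]]; destruct (Hsurj b) as [x Hx].
    destruct (Per_in_fibre_orbit _ _ p f g Hcomm Hfin n b x Hn Hb Hx) as [i Hi].
    exists (Nat.iter i (Nat.iter n f) x); split; auto.
    now apply fibre_iter_invariant with g.
  - intros Hreg fsharp Hsharp Hsharp_inj x; split.
    + apply (Per_of_inj_on_fibres _ _ p f g Hcomm Hfin).
      now apply inj_on_fibres_of_injective_sharp with fsharp.
    + apply (Per_semiconj _ _ p f g Hcomm).
Qed.
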